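(* For all positive integers $A,B$, with $n=A+B$, $$\mathrm{exa}_1(n,K_{A,B})=\binom{n}{2}-A-B+\mathrm{mup}(A,B).$$
   Context: $K_{A,B}$ is the complete bipartite graph with parts of sizes $A$ and $B$. For graphs $H,F$, $\mathcal N(H,F)$ is the number of subgraphs of $H$ isomorphic to $F$, and $\mathrm{exa}_1(n,F)$ is the largest number of edges of a simple graph $H$ on $n$ vertices with $\mathcal N(H,F)=1$. A unique partition of $A$ and $B$ consists of positive integers $A_1,\dots,A_a$ with $\sum_i A_i=A$ and $B_1,\dots,B_b$ with $\sum_j B_j=B$ such that, viewing these as $a+b$ indexed items, the only subsets of the items whose sum equals $A$ are the set of items $\{A_1,\dots,A_a\}$ and, in case $A=B$, also its complement $\{B_1,\dots,B_b\}$ (so e.g. $A_i\ne B_j$ is forced when $A\ne B$, while equal values among the $A_i$ are allowed). $\mathrm{mup}(A,B)$ is the maximum of $a+b$ over all unique partitions of $A$ and $B$, with the convention $\mathrm{mup}(1,1)=2$. *)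

From mathcomp Require Import all_boot.
Set Implicit Arguments. Unset Strict Implicit. Unset Printing Implicit Defensive.

Definition simple_graph (n : nat) (E : {set {set 'I_n}}) : bool :=
  [forall e in E, #|e| == 2].

Definition K_bip (A B : nat) : {set {set 'I_(A + B)}} :=
  [set e : {set 'I_(A + B)} | [exists i : 'I_(A + B), exists j : 'I_(A + B),
     [&& (i : nat) < A, A <= (j : nat) & e == [set i; j]]]].

(* N(H,F): number of subgraphs (W,S) of H = ('I_n, E) (W a vertex subset,
   S a subset of E) isomorphic to F = ('I_m, EF), i.e. there is a bijection
   f : 'I_m -> W mapping the edge set EF onto S. *)
Definition Ncopies (n m : nat) (E : {set {set 'I_n}}) (EF : {set {set 'I_m}})
  : nat :=
  #|[set p : {set 'I_n} * {set {set 'I_n}} |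
      (p.2 \subset E) &&
      [exists f : {ffun 'I_m -> 'I_n},
         [&& injectiveb f, p.1 == f @: 'I_m & p.2 == [set f @: (e : {set 'I_m}) | e in EF]]]]|.

Definition exa1 (n m : nat) (EF : {set {set 'I_m}}) : nat :=
  \max_(E : {set {set 'I_n}} | simple_graph E && (Ncopies E EF == 1)) #|E|.

(* Unique partition of A and B: items sA ++ sB (indexed by position). *)
Definition unique_partition (A B : nat) (sA sB : seq nat) : Prop :=
  [/\ all (fun x => 0 < x) (sA ++ sB), sumn sA = A, sumn sB = B &
    forall I : {set 'I_(size sA + size sB)},
      \sum_(i in I) nth 0 (sA ++ sB) i = A ->
      I = [set i : 'I_(size sA + size sB) | (i : nat) < size sA] \/
      (A = B /\ I = [set i : 'I_(size sA + size sB) | size sA <= (i : nat)])].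

(* m = mup(A,B): the maximum of a+b over unique partitions, with the
   convention mup(1,1) = 2. *)
Definition mup_spec (A B m : nat) : Prop :=
  if (A == 1) && (B == 1) then m = 2 else
  (exists sA sB, unique_partition A B sA sB /\ size sA + size sB = m) /\
  (forall sA sB, unique_partition A B sA sB -> size sA + size sB <= m).

From mathcomp Require Import all_boot zify.
Set Implicit Arguments. Unset Strict Implicit. Unset Printing Implicit Defensive.

(* Let F be the complement of a graph H on the n = A + B vertices.  A copy of
   K_{A,B} in H spans all vertices and is determined by the set X of its first
   part; it exists iff no edge of F joins X to its complement, i.e. iff X is a
   union of connected components of F.  As X and its complement give the same
   copy, H has a unique copy iff the component sizes of F, split according to
   X, form a unique partition of A and B.  A graph with k components has at
   least n - k edges, with equality for a forest of stars; hence
   |H| = C(n,2) - |F| <= C(n,2) - n + mup(A,B), and removing a forest of stars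
   realising an optimal unique partition attains the bound. *)

Section Labellings.
Variable T : finType.

Definition edge_closed (F : {set {set T}}) (X : {set T}) :=
  forall x y, [set x; y] \in F -> (x \in X) = (y \in X).

Definition label_closed (K : Type) (c : T -> K) (X : {set T}) :=
  forall x y, c x = c y -> (x \in X) = (y \in X).

Lemma edge_closed_setD1 (F : {set {set T}}) u v X : [set u; v] \in F ->
  edge_closed F X <-> edge_closed (F :\ [set u; v]) X /\ (u \in X) = (v \in X).
Proof.
move=> Fuv; split=> [hX | [hX huv] x y Fxy].
  by split=> [x y /setD1P [_ /hX] //|]; apply: hX.
have [exy | nexy] := eqVneq [set x; y] [set u; v]; last exact/hX/setD1P.
have : x \in [set u; v] by rewrite -exy set21.
have : y \in [set u; v] by rewrite -exy set22.
by rewrite !inE => /orP [] /eqP -> /orP [] /eqP ->.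
Qed.

Definition merge_labels (K : eqType) (c : T -> K) (u v : T) (x : T) :=
  if c x == c v then c u else c x.

Lemma label_closed_merge (K : eqType) (c : T -> K) u v X :
  label_closed (merge_labels c u v) X <-> label_closed c X /\ (u \in X) = (v \in X).
Proof.
rewrite /merge_labels; split=> [hX | [hX huv] x y].
  split=> [x y cxy|]; first by apply: hX; rewrite cxy.
  by apply: hX; rewrite eqxx; case: eqP.
case: eqP => cx; case: eqP => cy cxy.
- by rewrite (hX x v) // (hX y v).
- by rewrite (hX x v) // -huv (hX u y).
- by rewrite (hX x u) // huv (hX v y).
- exact: hX.
Qed.

Lemma card_merge_labels (K : finType) (c : T -> K) u v :
  #|c @: T| <= #|merge_labels c u v @: T|.+1.
Proof.
have sub : (c @: T) :\ c v \subset merge_labels c u v @: T.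
  apply/subsetP => l /setD1P [lv /imsetP [x _ elx]]; rewrite elx in lv *.
  by apply/imsetP; exists x; rewrite // /merge_labels (negbTE lv).
by rewrite (cardsD1 (c v)) imset_f // add1n ltnS subset_leq_card.
Qed.

(* The fibres of [c] are the connected components of [F]; each edge merges at
   most two components, whence the bound. *)
Lemma component_labelling (F : {set {set T}}) :
  (forall e, e \in F -> #|e| = 2) ->
  exists c : T -> T, (forall X, edge_closed F X <-> label_closed c X) /\
    #|T| <= #|F| + #|c @: T|.
Proof.
move: {2}#|F| (erefl #|F|) => N; elim: N F => [|N IH] F cardF F2.
  have -> : F = set0 by apply/eqP; rewrite -cards_eq0 cardF.
  exists id; split=> [X|]; last by rewrite cards0 card_imset.
  by split=> hX x y; [move=> -> | rewrite inE].
have [e Fe] : exists e, e \in F by apply/set0Pn; rewrite -card_gt0 cardF.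
have /eqP/cards2P [u [v [_ euv]]] := F2 e Fe; subst e.
have cardF' : #|F :\ [set u; v]| = N.
  by rewrite (cardsD1 [set u; v] F) Fe in cardF; case: cardF.
have [e /setD1P [_ /F2] // | c [cF cardT]] := IH _ cardF'.
exists (merge_labels c u v); split=> [X|].
  by rewrite label_closed_merge (edge_closed_setD1 _ Fe) cF.
move: cardT; rewrite cardF cardF'; have := card_merge_labels c u v; lia.
Qed.

Section Stars.
Variables (K : finType) (c : T -> K).

Definition label_root (x : T) : T := odflt x [pick y | c y == c x].

Lemma label_root_label x : c (label_root x) = c x.
Proof. by rewrite /label_root; case: pickP => //= y /eqP. Qed.

Lemma label_root_eq x y : c x = c y -> label_root x = label_root y.
Proof.
rewrite /label_root => cxy; rewrite cxy.
by case: pickP => // /(_ y); rewrite eqxx.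
Qed.

Definition star_edges : {set {set T}} :=
  [set [set x; label_root x] | x in [set x | label_root x != x]].

Lemma star_edges2 e : e \in star_edges -> #|e| = 2.
Proof. by case/imsetP => x; rewrite inE eq_sym => nx ->; rewrite cards2 nx. Qed.

Lemma edge_closed_star X : edge_closed star_edges X <-> label_closed c X.
Proof.
have root_in x : edge_closed star_edges X -> (x \in X) = (label_root x \in X).
  move=> hX; have [-> // | nx] := eqVneq (label_root x) x.
  by apply: hX; apply: imset_f; rewrite inE nx.
split=> [hX x y cxy | hX x y /imsetP [z _ ezxy]].
  by rewrite (root_in x hX) (root_in y hX) (label_root_eq cxy).
have cz w : w \in [set z; label_root z] -> c w = c z.
  by rewrite !inE => /orP [] /eqP ->; rewrite ?label_root_label.
by apply: hX; rewrite (cz x) ?(cz y) // -ezxy !inE eqxx ?orbT.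
Qed.

(* The roots are in bijection with the labels, and every other vertex
   contributes one edge. *)
Lemma card_star_edges : #|star_edges| + #|c @: T| <= #|T|.
Proof.
set R := [set x | label_root x == x].
have cR : c @: R = c @: T.
  apply/setP => l; apply/imsetP/imsetP => [[x _ ->] | [x _ ->]]; first by exists x.
  exists (label_root x); last by rewrite label_root_label.
  by rewrite inE (label_root_eq (label_root_label x)).
have injR : {in R &, injective c}.
  move=> x y; rewrite !inE => /eqP rx /eqP ry cxy.
  by rewrite -rx -ry (label_root_eq cxy).
rewrite -cR card_in_imset // -(cardsC R) addnC leq_add2l.
rewrite (leq_trans (leq_imset_card _ _)) // subset_leq_card //.
by apply/subsetP => x; rewrite !inE.
Qed.

End Stars.

End Labellings.

Lemma sum_nth (s : seq nat) : \sum_(j < size s) nth 0 s j = sumn s.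
Proof. by rewrite sumnE (big_nth 0) big_mkord. Qed.

Lemma sum_nth_cat_l (s1 s2 : seq nat) :
  \sum_(j < size s1 + size s2 | j < size s1) nth 0 (s1 ++ s2) j = sumn s1.
Proof.
have := @big_ord_widen_cond _ 0 addn _ _ xpredT (nth 0 (s1 ++ s2)) (leq_addr _ _).
rewrite /= => <-; rewrite -sum_nth.
by apply: eq_bigr => j _; rewrite nth_cat ltn_ord.
Qed.

Section SizedLabelling.
Variables (T : finType) (A B : nat) (sA sB : seq nat).
Local Notation k := (size sA + size sB).
Local Notation s := (sA ++ sB).
Variable c : T -> 'I_k.
Hypothesis card_fibre : forall j, #|[set x | c x == j]| = nth 0 s j.
Hypothesis fibre_gt0 : forall j : 'I_k, 0 < nth 0 s j.

Definition first_part : {set T} := [set x | c x < size sA].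

Lemma card_label_preimage (I : {set 'I_k}) :
  #|[set x | c x \in I]| = \sum_(j in I) nth 0 s j.
Proof.
rewrite -sum1_card (partition_big c (mem I)) /=; last by move=> x; rewrite inE.
apply: eq_bigr => j Ij; rewrite -card_fibre -sum1_card.
by apply: eq_bigl => x; rewrite !inE; case: eqP => [->|]; rewrite ?Ij ?andbF.
Qed.

Lemma label_preimage_inj (I I' : {set 'I_k}) :
  [set x | c x \in I] = [set x | c x \in I'] -> I = I'.
Proof.
move=> eqII'; apply/setP => j.
have /set0Pn [x] : [set x | c x == j] != set0 by rewrite -card_gt0 card_fibre.
by rewrite inE => /eqP <-; move/setP: eqII' => /(_ x); rewrite !inE.
Qed.

Lemma label_closed_preimage (X : {set T}) :
  label_closed c X -> X = [set x | c x \in c @: X].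
Proof.
move=> cX; apply/setP => x; rewrite inE.
by apply/idP/imsetP => [Xx | [y Xy /cX ->]]; first by exists x.
Qed.

Lemma card_labels : #|c @: T| = k.
Proof.
rewrite -[RHS]card_ord; apply: eq_card => j; rewrite inE.
have /set0Pn [x] : [set x | c x == j] != set0 by rewrite -card_gt0 card_fibre.
by rewrite inE => /eqP <-; rewrite imset_f.
Qed.

Lemma first_partE : first_part = [set x | c x \in [set j : 'I_k | j < size sA]].
Proof. by apply/setP => x; rewrite !inE. Qed.

Lemma first_partCE : ~: first_part = [set x | c x \in [set j : 'I_k | size sA <= j]].
Proof. by apply/setP => x; rewrite !inE -leqNgt. Qed.

Lemma card_first_part : #|first_part| = sumn sA.
Proof.
rewrite first_partE card_label_preimage -(sum_nth_cat_l sA sB).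
by apply: eq_bigl => j; rewrite inE.
Qed.

Lemma card_label_domain : #|T| = sumn s.
Proof.
rewrite -sum_nth size_cat (eq_card (B := [set x | c x \in [set: 'I_k]])) => [|x].
  by rewrite card_label_preimage; apply: eq_bigl => j; rewrite inE.
by rewrite !inE.
Qed.

(* The item sets summing to [A] are the label sets of the [c]-closed vertex
   sets of size [A]. *)
Lemma unique_partition_labelling : #|T| = A + B ->
  unique_partition A B sA sB <->
  #|first_part| = A /\ forall X, label_closed c X -> #|X| = A ->
    X = first_part \/ (A = B /\ X = ~: first_part).
Proof.
move=> cardT; split=> [[_ sumA _ uniqI] | [cardX0 uniqX]].
  split=> [|X cX cardX]; first by rewrite card_first_part.
  have /uniqI sumX : \sum_(j in c @: X) nth 0 s j = A.
    by rewrite -card_label_preimage -label_closed_preimage.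
  rewrite first_partCE first_partE (label_closed_preimage cX).
  by case: sumX => [-> | [AB ->]]; [left | right].
split.
- apply/(all_nthP 0) => j; rewrite size_cat => jk; exact: (fibre_gt0 (Ordinal jk)).
- by rewrite -card_first_part.
- by move: card_label_domain; rewrite cardT sumn_cat -card_first_part cardX0; lia.
move=> I sumI.
have cI : label_closed c [set x | c x \in I] by move=> x y cxy; rewrite !inE cxy.
have /(uniqX _ cI) : #|[set x | c x \in I]| = A by rewrite card_label_preimage.
rewrite first_partCE first_partE.
by case=> [/label_preimage_inj -> | [AB /label_preimage_inj ->]]; [left | right].
Qed.

End SizedLabelling.

Lemma labelling_of_sizes n k (s : seq nat) : size s = k -> sumn s = n ->
  exists c : 'I_n -> 'I_k, forall j, #|[set x | c x == j]| = nth 0 s j.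
Proof.
move=> <- <-; exists (fun x => Ordinal (reshape_indexP (ltn_ord x))) => j.
pose f (o : 'I_(nth 0 s j)) : 'I_(sumn s) := Ordinal (flatten_indexP (ltn_ord o)).
have f_inj : injective f.
  move=> o o' /(congr1 val) /= /(congr1 (reshape_offset s)).
  by rewrite !flatten_indexKr // => /val_inj.
rewrite -[nth 0 s j]card_ord -(card_imset _ f_inj); apply: eq_card => x.
rewrite !inE; apply/eqP/imsetP => [xj | [o _ ->]]; last first.
  by apply: val_inj; rewrite /= flatten_indexKl.
have offset_lt : reshape_offset s x < nth 0 s j.
  by rewrite -(congr1 val xj) reshape_offsetP.
exists (Ordinal offset_lt) => //; apply: val_inj.
by rewrite /= -(congr1 val xj) reshape_indexK.
Qed.

Lemma index_labelling (T K : finType) (c0 : T -> K) (L : seq K) k :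
  uniq L -> L =i c0 @: T -> size L = k ->
  let sizes := [seq #|[set x | c0 x == l]| | l <- L] in
  exists c : T -> 'I_k, [/\ forall x, val (c x) = index (c0 x) L,
    forall j, #|[set x | c x == j]| = nth 0 sizes j &
    forall j : 'I_k, 0 < nth 0 sizes j].
Proof.
move=> uniqL memL <- sizes.
have index_lt x : index (c0 x) L < size L by rewrite index_mem memL imset_f.
pose c x := Ordinal (index_lt x).
have c_nth l0 x (j : 'I_(size L)) : (c x == j) = (c0 x == nth l0 L j).
  apply/eqP/eqP => [<- | c0x]; first by rewrite nth_index ?memL ?imset_f.
  by apply: val_inj; rewrite /= c0x index_uniq.
have c_onto (j : 'I_(size L)) : exists x, c x = j.
  have /set0Pn [_ /imsetP [x0 _ _]] : c0 @: T != set0.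
    by rewrite -card_gt0 -(eq_card memL) (card_uniqP uniqL) (leq_ltn_trans _ (ltn_ord j)).
  have /imsetP [x _ ex] : nth (c0 x0) L j \in c0 @: T by rewrite -memL mem_nth.
  by exists x; apply/eqP; rewrite (c_nth (c0 x0)) ex.
have card_fibre (j : 'I_(size L)) : #|[set x | c x == j]| = nth 0 sizes j.
  have [x0 _] := c_onto j.
  rewrite (nth_map (c0 x0)) //; apply: eq_card => x.
  by rewrite !inE (c_nth (c0 x0)).
exists c; split=> // j; have [x cx] := c_onto j.
by rewrite -card_fibre card_gt0; apply/set0Pn; exists x; rewrite inE cx.
Qed.

Lemma ordered_relabelling (T K : finType) (c0 : T -> K) (Y : {set T}) :
  label_closed c0 Y ->
  exists sA sB (c : T -> 'I_(size sA + size sB)),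
  [/\ forall j, #|[set x | c x == j]| = nth 0 (sA ++ sB) j,
      forall j : 'I_(size sA + size sB), 0 < nth 0 (sA ++ sB) j,
      forall x y, c0 x = c0 y -> c x = c y,
      Y = first_part c &
      size sA + size sB = #|c0 @: T|].
Proof.
move=> c0Y; pose LA := enum (c0 @: Y); pose L := LA ++ enum (c0 @: ~: Y).
pose fibre l := #|[set x | c0 x == l]|.
pose sA := map fibre LA; pose sB := map fibre (enum (c0 @: ~: Y)).
have memL : L =i c0 @: T.
  move=> l; rewrite mem_cat !mem_enum.
  apply/orP/imsetP => [[] /imsetP [x _ ->] | [x _ ->]]; try by exists x.
  by case: (boolP (x \in Y)) => Yx; [left | right]; rewrite imset_f ?inE.
have inLA x : (c0 x \in LA) = (x \in Y).
  rewrite mem_enum; apply/imsetP/idP => [[y Yy exy] | Yx]; last by exists x.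
  by rewrite (c0Y _ _ exy).
have uniqL : uniq L.
  rewrite cat_uniq !enum_uniq andbT /=; apply/hasPn => l; rewrite mem_enum.
  by case/imsetP => y; rewrite inE => Yy ->; rewrite -/LA inLA (negbTE Yy).
have sizeL : size L = size sA + size sB by rewrite size_cat !size_map.
have [c [c_index card_fibre fibre_gt0]] := index_labelling uniqL memL sizeL.
exists sA, sB, c; rewrite -map_cat; split=> // [x y c0xy | |].
- by apply: val_inj; rewrite !c_index c0xy.
- apply/setP => x; rewrite inE c_index index_cat inLA size_map.
  by case Yx: (x \in Y); [rewrite index_mem inLA Yx | rewrite ltnNge leq_addr].
by rewrite -sizeL -(card_uniqP uniqL); apply/esym/eq_card.
Qed.

Lemma card_ord_lt n b : b <= n -> #|[set i : 'I_n | i < b]| = b.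
Proof.
move=> bn; have widen_inj : injective (widen_ord bn).
  by move=> i j /(congr1 val) eij; apply: val_inj.
rewrite -[RHS]card_ord -(card_imset _ widen_inj).
apply: eq_card => i; rewrite inE; apply/idP/imsetP => [ib | [j _ ->]].
  by exists (Ordinal ib) => //; apply: val_inj.
exact: ltn_ord j.
Qed.

Lemma imset_injT (T : finType) (f : T -> T) : injective f -> f @: T = setT.
Proof.
by move=> f_inj; apply/eqP; rewrite eqEcard subsetT cardsT (card_imset _ f_inj) leqnn.
Qed.

Section Copies.
Variables A B : nat.
Hypothesis A_gt0 : 0 < A.
Local Notation n := (A + B).
Local Notation T := 'I_n.

Definition cut_edges (X : {set T}) : {set {set T}} :=
  [set e : {set T} | [exists x in X, exists y in ~: X, e == [set x; y]]].

Lemma cut_edgesP (X : {set T}) e :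
  reflect (exists x y, [/\ x \in X, y \notin X & e = [set x; y]]) (e \in cut_edges X).
Proof.
rewrite inE; apply: (iffP existsP) => [[x /andP [Xx /existsP [y]]] | [x [y [Xx Xy ->]]]].
  by rewrite inE => /andP [Xy /eqP ->]; exists x, y.
by exists x; rewrite Xx; apply/existsP; exists y; rewrite inE Xy eqxx.
Qed.

Lemma mem_cut_edges (X : {set T}) x y :
  x \in X -> y \notin X -> [set x; y] \in cut_edges X.
Proof. by move=> Xx Xy; apply/cut_edgesP; exists x, y. Qed.

Lemma cut_edgesC (X : {set T}) : cut_edges (~: X) = cut_edges X.
Proof.
apply/setP => e; apply/cut_edgesP/cut_edgesP => -[x [y [Xx Xy ->]]];
  by exists y, x; rewrite setUC !inE ?negbK in Xx Xy *.
Qed.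

Lemma mem_cut_edges2 (X : {set T}) u v :
  ([set u; v] \in cut_edges X) = ((u \in X) != (v \in X)).
Proof.
apply/idP/idP => [/cut_edgesP [a [b [Xa Xb eab]]] | ].
  have : a \in [set u; v] /\ b \in [set u; v] by rewrite eab !inE !eqxx orbT.
  rewrite !inE => -[/orP [] /eqP ea /orP [] /eqP eb]; move: Xa Xb; rewrite ea eb;
    by case: (u \in X); case: (v \in X).
case Xu: (u \in X) => /= Xv; first by rewrite mem_cut_edges.
by rewrite setUC mem_cut_edges ?Xu //; move: Xv; case: (v \in X).
Qed.

Lemma cut_edges_inj (X X' : {set T}) :
  cut_edges X' = cut_edges X -> X' = X \/ X' = ~: X.
Proof.
have x : T := Ordinal (ltn_addr B A_gt0).
move=> eqcut; have sep u v : ((u \in X') != (v \in X')) = ((u \in X) != (v \in X)).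
  by rewrite -!mem_cut_edges2 eqcut.
have [xX | xX] := eqVneq (x \in X') (x \in X); [left | right];
  apply/setP => z; move: xX (sep z x); rewrite ?inE;
  by case: (z \in X'); case: (x \in X'); case: (z \in X); case: (x \in X).
Qed.

Lemma K_bipP (e : {set T}) :
  reflect (exists i j : T, [/\ i < A, A <= j & e = [set i; j]]) (e \in K_bip A B).
Proof.
rewrite inE; apply: (iffP existsP) => [[i /existsP [j]] | [i [j [iA Aj ->]]]].
  by case/and3P => iA Aj /eqP ->; exists i, j.
by exists i; apply/existsP; exists j; rewrite iA Aj eqxx.
Qed.

Lemma imset_K_bip (f : T -> T) : injective f ->
  [set f @: (e : {set T}) | e in K_bip A B] = cut_edges (f @: [set i : T | i < A]).
Proof.
move=> f_inj; have [g fK gK] := injF_bij f_inj.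
apply/setP => e; apply/imsetP/cut_edgesP => [[_ /K_bipP [i [j [iA Aj ->]]] ->] | ].
  exists (f i), (f j); rewrite imsetU1 imset_set1 mem_imset ?inE //.
  split=> //; apply/imsetP => -[k]; rewrite inE => kA /f_inj ejk.
  by rewrite -ejk ltnNge Aj in kA.
move=> [_ [y [/imsetP [i iA ->] fAy ->]]].
exists [set i; g y]; last by rewrite imsetU1 imset_set1 gK.
apply/K_bipP; exists i, (g y); split=> //; first by rewrite inE in iA.
by rewrite leqNgt; apply: contra fAy => gyA; rewrite -[y]gK imset_f ?inE.
Qed.

Definition K_bip_copies (E : {set {set T}}) :=
  [set p : {set T} * {set {set T}} | (p.2 \subset E) &&
    [exists f : {ffun T -> T}, [&& injectiveb f, p.1 == f @: T &
      p.2 == [set f @: (e : {set T}) | e in K_bip A B]]]].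

Lemma K_bip_copiesP (E : {set {set T}}) p : p \in K_bip_copies E <->
  exists2 X : {set T}, #|X| = A & p = (setT, cut_edges X) /\ cut_edges X \subset E.
Proof.
split=> [| [X cardX [-> cutE]]].
  rewrite inE => /andP [p2E /existsP [f /and3P [/injectiveP f_inj /eqP p1 /eqP p2]]].
  have fT := imset_injT f_inj.
  exists (f @: [set i : T | i < A]); first by rewrite card_imset // card_ord_lt ?leq_addr.
  by rewrite -(imset_K_bip f_inj) -p2 -fT -p1; split=> //; case: p {p1 p2 p2E}.
pose x0 : T := Ordinal (ltn_addr B A_gt0).
pose s := enum X ++ enum (~: X).
have size_s : size s = n by rewrite size_cat -!cardE cardsC card_ord.
have uniq_s : uniq s.
  rewrite cat_uniq !enum_uniq andbT /=; apply/hasPn => x.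
  by rewrite !mem_enum inE.
pose f := [ffun i : T => nth x0 s i].
have f_inj : injective f.
  by move=> i j; rewrite !ffunE => /eqP; rewrite nth_uniq ?size_s // => /eqP /val_inj.
have fA : f @: [set i : T | i < A] = X.
  apply/eqP; rewrite eqEcard card_imset // card_ord_lt ?leq_addr // cardX leqnn andbT.
  apply/subsetP => y /imsetP [i]; rewrite inE => iA ->.
  by rewrite ffunE nth_cat -cardE cardX iA -mem_enum mem_nth // -cardE cardX.
rewrite inE /= cutE; apply/existsP; exists f.
rewrite (imset_K_bip f_inj) fA eqxx andbT; apply/andP; split; first exact/injectiveP.
by rewrite imset_injT.
Qed.

Lemma Ncopies_K_bip_eq1 (E : {set {set T}}) : Ncopies E (K_bip A B) = 1 <->
  exists X0 : {set T}, [/\ #|X0| = A, cut_edges X0 \subset E &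
    forall X : {set T}, #|X| = A -> cut_edges X \subset E -> X = X0 \/ X = ~: X0].
Proof.
have -> : Ncopies E (K_bip A B) = #|K_bip_copies E| by [].
split=> [/eqP /cards1P [p copiesE] | [X0 [cardX0 cutE uniqX0]]].
  have /K_bip_copiesP [X0 cardX0 [ep cutE]] : p \in K_bip_copies E by rewrite copiesE set11.
  exists X0; split=> // X cardX cutX; apply: cut_edges_inj.
  have : (setT, cut_edges X) \in K_bip_copies E by apply/K_bip_copiesP; exists X.
  by rewrite copiesE in_set1 ep => /eqP [].
apply/eqP/cards1P; exists (setT, cut_edges X0); apply/setP => p; rewrite in_set1.
apply/idP/eqP => [/K_bip_copiesP [X cardX [-> cutX]] | ->].
  by case: (uniqX0 X cardX cutX) => ->; rewrite ?cut_edgesC.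
by apply/K_bip_copiesP; exists X0.
Qed.

Definition non_edges (E : {set {set T}}) := [set e : {set T} | #|e| == 2] :\: E.

Lemma non_edges2 (E : {set {set T}}) e : e \in non_edges E -> #|e| = 2.
Proof. by rewrite !inE => /andP [_ /eqP]. Qed.

Lemma simple_graph_non_edges (E : {set {set T}}) : simple_graph (non_edges E).
Proof. by apply/forall_inP => e /non_edges2 ->. Qed.

Lemma non_edgesK (F : {set {set T}}) :
  (forall e, e \in F -> #|e| = 2) -> non_edges (non_edges F) = F.
Proof.
move=> F2; apply/setP => e; rewrite !inE.
by case: (boolP (e \in F)) => [/F2 -> | _] //; case: (_ == 2).
Qed.

Lemma card_non_edges (E : {set {set T}}) : simple_graph E ->
  #|E| + #|non_edges E| = 'C(n, 2).
Proof.
move=> /forall_inP E2; have := card_draws T 2; rewrite card_ord => <-.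
rewrite -(cardsID E [set e : {set T} | #|e| == 2]); congr (_ + _).
by rewrite (setIidPr _) //; apply/subsetP => e /E2; rewrite inE => ->.
Qed.

Lemma edge_closed_non_edges (E : {set {set T}}) (X : {set T}) :
  edge_closed (non_edges E) X <-> cut_edges X \subset E.
Proof.
split=> [closedX | cutE x y]; last first.
  rewrite inE => /andP [xyE _]; apply: contraNeq xyE => sep.
  by rewrite (subsetP cutE) ?mem_cut_edges2.
apply/subsetP => _ /cut_edgesP [x [y [Xx Xy ->]]].
have xy : x != y by apply: contraNneq Xy => <-.
apply: contraT => xyE; move: (closedX x y).
by rewrite !inE xyE cards2 xy Xx (negbTE Xy) => /(_ isT).
Qed.

End Copies.

Lemma unique_partition_singletons A B : 0 < A -> 0 < B ->
  unique_partition A B [:: A] [:: B].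
Proof.
move=> A_gt0 B_gt0; split=> /=; rewrite ?A_gt0 ?B_gt0 ?addn0 // => I.
rewrite big_mkcond !big_ord_recl big_ord0 /=.
have ord2 (i : 'I_2) : i = ord0 \/ i = lift ord0 ord0.
  by case: i => -[|[|//]] ilt; [left | right]; apply: val_inj.
case I0: (ord0 \in I); case I1: (lift ord0 ord0 \in I) => /= sumI; try lia.
  by left; apply/setP => i; rewrite inE; case: (ord2 i) => ->; rewrite ?I0 ?I1.
right; split; first lia.
by apply/setP => i; rewrite inE; case: (ord2 i) => ->; rewrite ?I0 ?I1.
Qed.

Lemma size_unique_partition A B sA sB : unique_partition A B sA sB ->
  size sA + size sB <= A + B.
Proof.
case=> pos <- <- _; rewrite -size_cat -sumn_cat.
by elim: (sA ++ sB) pos => //= x s IHs /andP [x_gt0 /IHs]; lia.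
Qed.

Section Extremal.
Variables A B : nat.
Hypotheses (A_gt0 : 0 < A) (B_gt0 : 0 < B).
Local Notation n := (A + B).
Local Notation T := 'I_n.

Lemma unique_partition_of_graph (E : {set {set T}}) :
  simple_graph E -> Ncopies E (K_bip A B) = 1 ->
  exists sA sB, unique_partition A B sA sB /\
    #|E| + n <= 'C(n, 2) + (size sA + size sB).
Proof.
move=> simpleE /(Ncopies_K_bip_eq1 A_gt0) [Y [cardY cutY uniqY]].
have [c0 [c0E cardT]] := component_labelling (@non_edges2 A B E).
have c0Y : label_closed c0 Y by apply/c0E/edge_closed_non_edges.
have [sA [sB [c [card_fibre fibre_gt0 c0c Yc sizeAB]]]] := ordered_relabelling c0Y.
exists sA, sB; split.
  apply/(unique_partition_labelling card_fibre fibre_gt0 (card_ord _)).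
  rewrite -Yc; split=> // X cX cardX.
  have cutX : cut_edges X \subset E.
    by apply/edge_closed_non_edges/c0E => x y /c0c; apply: cX.
  have [-> | XY] := uniqY X cardX cutX; [by left | right; split=> //].
  by move: (cardsC Y); rewrite card_ord cardY -XY cardX; lia.
rewrite -(card_non_edges simpleE) -addnA leq_add2l sizeAB.
by move: cardT; rewrite card_ord.
Qed.

Lemma graph_of_unique_partition sA sB : unique_partition A B sA sB ->
  exists E : {set {set T}}, [/\ simple_graph E, Ncopies E (K_bip A B) = 1 &
    'C(n, 2) + (size sA + size sB) <= #|E| + n].
Proof.
move=> up; have [/(all_nthP 0) pos sumA sumB _] := up.
have [c card_fibre] : exists c : T -> 'I_(size sA + size sB),
    forall j, #|[set x | c x == j]| = nth 0 (sA ++ sB) j.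
  by apply: labelling_of_sizes; rewrite ?size_cat // sumn_cat sumA sumB.
have fibre_gt0 (j : 'I_(size sA + size sB)) : 0 < nth 0 (sA ++ sB) j.
  by apply: pos; rewrite size_cat.
have [cardX0 uniqX0] :=
  proj1 (unique_partition_labelling card_fibre fibre_gt0 (card_ord _)) up.
have cutE X : cut_edges X \subset non_edges (star_edges c) <-> label_closed c X.
  by rewrite -edge_closed_non_edges non_edgesK ?edge_closed_star //; apply: star_edges2.
exists (non_edges (star_edges c)); split.
- exact: simple_graph_non_edges.
- apply/(Ncopies_K_bip_eq1 A_gt0); exists (first_part c); split=> //.
    by apply/cutE => x y cxy; rewrite !inE cxy.
  move=> X cardX /cutE cX.
  by case: (uniqX0 X cX cardX) => [-> | [_ ->]]; [left | right].
have := card_non_edges (simple_graph_non_edges (star_edges c)).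
rewrite non_edgesK; last exact: star_edges2.
move=> <-; rewrite -addnA leq_add2l.
by have := card_star_edges c; rewrite card_labels // card_ord.
Qed.

Lemma exa1_ge sA sB : unique_partition A B sA sB ->
  'C(n, 2) + (size sA + size sB) <= exa1 n (K_bip A B) + n.
Proof.
move=> /graph_of_unique_partition [E [simpleE NE cardE]].
apply: leq_trans cardE _; rewrite leq_add2r /exa1.
apply: (@leq_bigmax_cond _ _ (fun E0 : {set {set T}} => #|E0|) E).
by rewrite simpleE NE eqxx.
Qed.

Lemma exa1_le : exists sA sB, unique_partition A B sA sB /\
  exa1 n (K_bip A B) + n <= 'C(n, 2) + (size sA + size sB).
Proof.
pose P := [pred E : {set {set T}} | simple_graph E && (Ncopies E (K_bip A B) == 1)].
have [E0 [simpleE0 NE0 _]] :=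
  graph_of_unique_partition (unique_partition_singletons A_gt0 B_gt0).
rewrite /exa1; have [|E /andP [simpleE /eqP NE] ->] :=
  eq_bigmax_cond (fun E => #|E|) (A := P).
  by apply/card_gt0P; exists E0; rewrite inE simpleE0 NE0 eqxx.
exact: unique_partition_of_graph.
Qed.

End Extremal.

Theorem proposition3p1 (A B : nat) (hA : 0 < A) (hB : 0 < B) :
  exists m, mup_spec A B m /\
    exa1 (A + B) (K_bip A B) + A + B = 'C(A + B, 2) + m.
Proof.
have [sA [sB [up exa1_leq]]] := exa1_le hA hB.
have exa1_geq := @exa1_ge A B hA.
exists (size sA + size sB); split; last by have := exa1_geq _ _ up; lia.
rewrite /mup_spec; case: ifP => [/andP [/eqP A1 /eqP B1] | _].
  have := exa1_geq _ _ (unique_partition_singletons hA hB).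
  by have := size_unique_partition up; rewrite /=; lia.
split; first by exists sA, sB.
by move=> sA' sB' /exa1_geq; lia.
Qed.
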